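(* Let $p$ be an odd prime and let $r\in\{2,3,\dots,p-1\}$ be a primitive root modulo $p$. (1) If $p\equiv1\pmod4$, then at least one of $r$ and $p-r$ is a primitive root modulo $p^2$. (2) If $p\equiv3\pmod4$, let $s\in\{1,\dots,p-1\}$ be the integer with $s\equiv -r^2\pmod p$. Then at least one of $r$ and $s$ is a primitive root modulo $p^2$.
   Context: An integer $r$ is a primitive root modulo $m$ if $\gcd(r,m)=1$ and the multiplicative order of $r$ modulo $m$ equals $\varphi(m)$, where $\varphi$ is Euler's totient function. *)

From mathcomp Require Import all_boot.
Set Implicit Arguments. Unset Strict Implicit. Unset Printing Implicit Defensive.

Definition is_mult_order (m r k : nat) : Prop :=
  [/\ 0 < k, r ^ k = 1 %[mod m]
    & forall j, 0 < j -> r ^ j = 1 %[mod m] -> k <= j].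

Definition primitive_root (m r : nat) : Prop :=
  coprime r m /\ is_mult_order m r (totient m).

From mathcomp Require Import all_boot all_algebra all_solvable zify.
Set Implicit Arguments. Unset Strict Implicit. Unset Printing Implicit Defensive.
Import GRing.Theory.

(* If a is a primitive root modulo p then a^((p-1)/2) = -1 (mod p), so -a^i is
   congruent to the power a^((p-1)/2 + i), which is again a primitive root
   when that exponent is prime to p - 1: for i = 1 this happens iff
   p = 1 (mod 4), for i = 2 iff p = 3 (mod 4).  A primitive root modulo p
   lifts to one modulo p^2 unless its (p-1)-th power is 1 modulo p^2, and
   this cannot happen for both x and x + e when e = 0 (mod p) but
   e <> 0 (mod p^2): since e^2 = 0 (mod p^2), the binomial formula gives
   (x + e)^(p-1) = x^(p-1) + (p-1) e x^(p-2) (mod p^2), forcing e = 0.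
   It is applied to x = -r^i, whose (p-1)-th power is that of r^i as p - 1
   is even. *)

Lemma expnM_mod1 m a x k : a ^ x = 1 %[mod m] -> a ^ (x * k) = 1 %[mod m].
Proof. by move=> ax1; rewrite expnM -modnXm ax1 modnXm exp1n. Qed.

Lemma expn_gcdn_mod1 m a x y :
  a ^ x = 1 %[mod m] -> a ^ y = 1 %[mod m] -> a ^ gcdn x y = 1 %[mod m].
Proof.
have [-> _ ay1 | x_gt0 ax1 ay1] := posnP x; first by rewrite gcd0n.
case: (egcdnP y x_gt0) => kx ky Bezout _.
rewrite -(expnM_mod1 kx ax1) [x * kx]mulnC Bezout expnD [ky * y]mulnC.
by rewrite -modnMml (expnM_mod1 ky ay1) modnMml mul1n.
Qed.

Lemma is_mult_order_dvdn m a k j :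
  is_mult_order m a k -> a ^ j = 1 %[mod m] -> k %| j.
Proof.
case=> k_gt0 ak1 kmin aj1.
have g_gt0 : 0 < gcdn k j by rewrite gcdn_gt0 k_gt0.
apply/gcdn_idPl/eqP; rewrite eqn_leq dvdn_leq ?dvdn_gcdl //=.
exact: kmin g_gt0 (expn_gcdn_mod1 ak1 aj1).
Qed.

Lemma primitive_root_eqmod m a b :
  a = b %[mod m] -> primitive_root m a -> primitive_root m b.
Proof.
move=> ab [a_co [t_gt0 at1 tmin]].
have abX j : a ^ j = b ^ j %[mod m] by rewrite -modnXm ab modnXm.
split; first by rewrite -coprime_modl -ab coprime_modl.
by split=> // [|j j_gt0 bj1]; [rewrite -abX | apply: tmin; rewrite // abX].
Qed.

Lemma primitive_root_expn m a e :
  primitive_root m a -> coprime e (totient m) -> primitive_root m (a ^ e).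
Proof.
move=> [a_co ord] e_co; have [t_gt0 at1 _] := ord.
split; first exact: coprimeXl.
split=> // [|j j_gt0 aej1]; first by rewrite -expnM mulnC expnM_mod1.
rewrite coprime_sym in e_co; rewrite dvdn_leq // -(Gauss_dvdr _ e_co).
by apply: is_mult_order_dvdn ord _; rewrite expnM.
Qed.

Lemma odd_half_mod4 p : odd p -> odd p./2 = (p %% 4 == 3).
Proof.
move=> p_odd; have := modn2 p; have := modn2 p./2; rewrite p_odd -divn2.
by case: (odd _) => /= ? ?; apply/esym/eqP; lia.
Qed.

Lemma odd_pred_half p : odd p -> p.-1 = p./2.*2.
Proof. by move=> p_odd; rewrite -{1}(odd_double_half p) p_odd. Qed.

Lemma primitive_root_half p a :
  prime p -> odd p -> primitive_root p a -> p %| a ^ p./2 + 1.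
Proof.
move=> p_pr p_odd [a_co [_ ap1 pmin]]; rewrite totient_prime // in ap1 pmin.
have p_gt1 := prime_gt1 p_pr.
have p_half := odd_pred_half p_odd.
have h_gt0 : 0 < p./2 by rewrite -double_gt0 -p_half -subn1 subn_gt0.
have a_gt0 : 0 < a.
  move: a_co; rewrite lt0n; apply: contraTneq => ->.
  by rewrite /coprime gcd0n gtn_eqF.
have : p %| (a ^ p./2) ^ 2 - 1 ^ 2.
  by rewrite -eqn_mod_dvd ?expn_gt0 ?a_gt0 // exp1n -expnM muln2 -p_half ap1.
rewrite subn_sqr Euclid_dvdM // => /orP [|//].
rewrite -eqn_mod_dvd ?expn_gt0 ?a_gt0 // => /eqP/(pmin _ h_gt0).
by rewrite p_half -addnn -{3}[p./2]add0n leq_add2r leqNgt h_gt0.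
Qed.

Lemma coprime_addn_double h i :
  coprime (h + i) h.*2 = odd (h + i) && coprime i h.
Proof.
by rewrite -muln2 coprimeMr coprimen2 andbC /coprime gcdnC gcdnDl gcdnC.
Qed.

Lemma primitive_root_oppX p a b i :
  prime p -> odd p -> primitive_root p a -> p %| b + a ^ i ->
  odd (p./2 + i) -> coprime i p./2 -> primitive_root p b.
Proof.
move=> p_pr p_odd a_prim p_b_ai odd_hi i_co.
have p_half := odd_pred_half p_odd.
apply: (@primitive_root_eqmod _ (a ^ (p./2 + i))).
  have p_ahi_ai : p %| a ^ (p./2 + i) + a ^ i.
    by rewrite expnD -{2}[a ^ i]mul1n -mulnDl dvdn_mulr ?primitive_root_half.
  by apply/eqP; rewrite -(eqn_modDr (a ^ i)) (eqP p_b_ai) (eqP p_ahi_ai).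
apply: primitive_root_expn a_prim _.
by rewrite totient_prime // p_half coprime_addn_double odd_hi.
Qed.

Lemma eqmodZp m a b : 1 < m -> (a = b %[mod m]) <-> (a%:R = b%:R :> 'Z_m)%R.
Proof.
move=> m_gt1; split=> [ab | /(congr1 val)]; last by rewrite /= !val_Zp_nat.
by rewrite -(Zp_nat_mod m_gt1) ab Zp_nat_mod.
Qed.

Lemma dvdnZp m k : 1 < m -> (m %| k) <-> (k%:R = 0 :> 'Z_m)%R.
Proof.
move=> m_gt1; split=> [/eqP mk0 | k0]; last first.
  by apply/eqP; rewrite -(mod0n m); apply/(eqmodZp k 0 m_gt1).
by apply/(eqmodZp k 0 m_gt1); rewrite mk0 mod0n.
Qed.

Open Scope ring_scope.

Lemma exprD_sqr0 (R : comPzRingType) (x e : R) n :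
  e ^+ 2 = 0 -> (x + e) ^+ n.+1 = x ^+ n.+1 + (e * x ^+ n) *+ n.+1.
Proof.
move=> e2; elim: n => [|n IHn]; first by rewrite expr1 expr0 mulr1 addrC.
have ex : x * (e * x ^+ n) = e * x ^+ n.+1 by rewrite mulrCA -exprS.
rewrite exprS IHn mulrDl mulrDr -exprS mulrnAr ex mulrDr mulrnAr mulrA.
by rewrite -expr2 e2 mul0r mul0rn addr0 -addrA [X in _ + X]addrC -mulrS.
Qed.

Lemma expr_eq1_sqr0 (R : comPzRingType) (x e : R) n :
  e ^+ 2 = 0 -> e *+ n.+1 = 0 -> x ^+ n = 1 -> (x + e) ^+ n = 1 -> e = 0.
Proof.
case: n => [|n] e2 e_n1; first by rewrite mulr1n in e_n1.
rewrite exprD_sqr0 // => xn1; rewrite xn1 -{2}[1]addr0 => /addrI exn0.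
have e_n0 : e *+ n.+1 = 0.
  by rewrite -[e]mulr1 -xn1 exprS mulrCA -mulrnAr exn0 mulr0.
by move: e_n1; rewrite mulrS e_n0 addr0.
Qed.

Close Scope ring_scope.

Lemma expn_pred_mod_sqr_opp_neq1 p a b :
  odd p -> p %| a + b -> 0 < a + b < p ^ 2 ->
  a ^ p.-1 = 1 %[mod p ^ 2] -> b ^ p.-1 != 1 %[mod p ^ 2].
Proof.
case: p => [//|n] p_odd p_ab /andP [ab_gt0 ab_lt] ap1.
have m_gt1 : 1 < n.+1 ^ 2 by apply: leq_trans ab_lt.
have n_even : ~~ odd n by [].
apply/negP => /eqP /(eqmodZp _ _ m_gt1); rewrite natrX => bp1.
move/(eqmodZp _ _ m_gt1): ap1; rewrite natrX => ap1.
have : ((a + b)%:R = 0 :> 'Z_(n.+1 ^ 2))%R.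
  apply: (@expr_eq1_sqr0 _ (- a%:R) _ n).
  - by rewrite -natrX; apply/dvdnZp; rewrite ?dvdn_exp2r.
  - by rewrite -mulrnA; apply/dvdnZp; rewrite // expnS expn1 dvdn_mul.
  - by rewrite exprNn -signr_odd (negbTE n_even) expr0 mul1r ap1.
  - by rewrite natrD addKr bp1.
move/(dvdnZp _ m_gt1)/(dvdn_leq ab_gt0).
by rewrite leqNgt ab_lt.
Qed.

Lemma primitive_root_lift_sqr p a :
  prime p -> primitive_root p a -> a ^ p.-1 != 1 %[mod p ^ 2] ->
  primitive_root (p ^ 2) a.
Proof.
move=> p_pr [a_co ord] ap1; rewrite totient_prime // in ord.
have pm1_gt0 : 0 < p.-1 by rewrite -subn1 subn_gt0 prime_gt1.
have co2 : coprime a (p ^ 2) by rewrite coprime_pexpr.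
have a_tot := Euler_exp_totient co2.
rewrite /primitive_root totient_pfactor // expn1 in a_tot *.
split=> //; split=> [|//|j j_gt0 aj1].
  by rewrite muln_gt0 pm1_gt0 prime_gt0.
have ag1 := expn_gcdn_mod1 aj1 a_tot; set g := gcdn j _ in ag1.
have /dvdnP [u g_def] : p.-1 %| g.
  apply: is_mult_order_dvdn ord _.
  have p_dvd_p2 : p %| p ^ 2 by apply: (dvdn_exp2l p (isT : 1 <= 2)).
  by rewrite -(modn_dvdm _ p_dvd_p2) ag1 modn_dvdm.
have : u %| p by rewrite -(dvdn_pmul2r pm1_gt0) -g_def mulnC dvdn_gcdr.
case/primeP: p_pr => _ /[apply] /orP [/eqP u1 | /eqP up].
  by move: ap1; rewrite -ag1 -/g g_def u1 mul1n eqxx.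
apply: dvdn_leq => //; apply: dvdn_trans (dvdn_gcdl j (p.-1 * p)).
by rewrite -/g g_def up mulnC.
Qed.

Lemma primitive_root_sqr_or p r b i :
  prime p -> odd p -> primitive_root p r -> primitive_root p b ->
  p %| b + r ^ i -> 0 < b + r ^ i < p ^ 2 ->
  primitive_root (p ^ 2) r \/ primitive_root (p ^ 2) b.
Proof.
move=> p_pr p_odd r_prim b_prim p_bri bri_bnd.
have [rp1 | rp1] := eqVneq (r ^ p.-1 %% p ^ 2) (1 %% p ^ 2); last first.
  by left; apply: primitive_root_lift_sqr.
right; apply: primitive_root_lift_sqr => //.
apply: (@expn_pred_mod_sqr_opp_neq1 _ (r ^ i)); rewrite 1?addnC //.
by rewrite expnAC -modnXm rp1 modnXm exp1n.
Qed.

Theorem mainTheorem12 (p r : nat) :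
  prime p -> odd p -> 2 <= r <= p.-1 -> primitive_root p r ->
  (p %% 4 = 1 -> primitive_root (p ^ 2) r \/ primitive_root (p ^ 2) (p - r)) /\
  (p %% 4 = 3 -> forall s : nat, 1 <= s <= p.-1 ->
     (s + r ^ 2) %% p = 0 ->
     primitive_root (p ^ 2) r \/ primitive_root (p ^ 2) s).
Proof.
move=> p_pr p_odd r_bnd r_prim.
split=> [p4 | p4 s s_bnd p_sr].
  have h_even : ~~ odd p./2 by rewrite odd_half_mod4 // p4.
  have p_dvd_pr : p %| p - r + r ^ 1 by rewrite expn1 subnK ?dvdnn //; lia.
  apply: (primitive_root_sqr_or p_pr p_odd r_prim _ p_dvd_pr).
    apply: (primitive_root_oppX p_pr p_odd r_prim p_dvd_pr).
      by rewrite addn1.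
    by rewrite coprime1n.
  by rewrite expn1 subnK; lia.
have h_odd : odd p./2 by rewrite odd_half_mod4 // p4.
have p_dvd_sr : p %| s + r ^ 2 by apply/eqP.
apply: (primitive_root_sqr_or p_pr p_odd r_prim _ p_dvd_sr).
  apply: (primitive_root_oppX p_pr p_odd r_prim p_dvd_sr).
    by rewrite addn2 /= negbK.
  by rewrite coprime2n.
have [q p_def] : exists q, p = q.+1 by exists p.-1; lia.
by rewrite p_def /= in s_bnd r_bnd *; nia.
Qed.
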